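(* (i) For every abstract storage device $D$, $C(D)=\max_{\pi\in\mathcal{P}_D}\log|\pi|$. (ii) For all ASDs $D,D'$, $C(D\times D')=C(D)+C(D')$. (iii) For every ASD $D$ and every integer $k\ge1$, $C(D^{(k)})\le k\cdot C(D)$.
   Context: An abstract storage device (ASD) is a pair $D=(\mathcal{S}_D,\mathcal{P}_D)$, $\mathcal{S}_D$ a finite set and $\mathcal{P}_D$ a finite family of partitions of $\mathcal{S}_D$; $|\pi|$ is the number of blocks. For a partition $\pi$ of $\mathcal{S}'$ and $\phi:\mathcal{S}\to\mathcal{S}'$, $\pi\circ\phi$ is the partition of $\mathcal{S}$ with $x,y$ in the same block iff $\phi(x),\phi(y)$ are in the same block of $\pi$; $\pi\preceq\rho$ means every block of $\pi$ lies in a block of $\rho$; $\wedge$ is the meet of partitions. $D\le D'$ means there exist $\phi:\mathcal{S}_D\to\mathcal{S}_{D'}$, $\alpha:\mathcal{P}_D\to\mathcal{P}_{D'}$ with $\alpha(\pi)\circ\phi\preceq\pi$ for all $\pi\in\mathcal{P}_D$. $C_m$ is the ASD with state space $\{1,\dots,m\}$ and partition set $\{\{\{1\},\dots,\{m\}\}\}$. The storage capacity is $C(D)=\max\{\log m: m\in\mathbb{N}, C_m\le D\}$ (log base 2). The direct product $D\times D'$ has state space $\mathcal{S}_D\times\mathcal{S}_{D'}$ and partition set $\{\pi\times\pi'\}$ with $\pi\times\pi'=\{B\times B':B\in\pi,B'\in\pi'\}$. $D^{(k)}$ has state space $\mathcal{S}_D$ and partition set $\{\pi_1\wedge\cdots\wedge\pi_k:\pi_i\in\mathcal{P}_D\}$.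 *)

From HB Require Import structures.
From mathcomp Require Import all_classical all_reals all_analysis.
From mathcomp Require Import all_boot all_order all_algebra.
Set Implicit Arguments. Unset Strict Implicit. Unset Printing Implicit Defensive.
Import Order.TTheory GRing.Theory Num.Theory.
Local Open Scope ring_scope.

(* An abstract storage device: a finite state space with a finite family of
   partitions of it (partitions in the sense of finset's [partition P D]). *)
Record asd := ASD { st : finType; parts : {set {set {set st}}} }.

(* Well-formedness: each member of parts is a partition of the state space.
   Moreover the state space and family are nonempty (needed for C(D) to be
   defined). *)
Definition wf_asd (D : asd) : Prop :=
  [/\ (forall p, p \in parts D -> finset.partition p [set: st D]),
      (0 < #|st D|)%N & parts D != finset.set0].

Definition pcomp (S S' : finType) (pi : {set {set S'}}) (phi : S -> S')
  : {set {set S}} := [set phi @^-1: B | B : {set S'} in pi] :\ finset.set0.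

Definition refines (S : finType) (pi rho : {set {set S}}) : Prop :=
  forall B, B \in pi -> exists2 C, C \in rho & B \subset C.

Definition asd_le (D D' : asd) : Prop :=
  exists (phi : st D -> st D') (alpha : {set {set st D}} -> {set {set st D'}}),
    forall p, p \in parts D -> alpha p \in parts D' /\ refines (pcomp (alpha p) phi) p.

Definition Cm (m : nat) : asd :=
  @ASD 'I_m [set [set [set i] | i : 'I_m]].

Definition log2 (R : realType) (x : R) : R := ln x / ln 2.
Arguments log2 {R} x.

Definition cap_set (R : realType) (D : asd) : set R :=
  [set x | exists2 m : nat, (0 < m)%N /\ asd_le (Cm m) D & x = log2 (m%:R : R)].

Arguments cap_set R D : clear implicits.

Definition is_max (R : realType) (A : set R) (x : R) : Prop :=
  A x /\ (forall y, A y -> y <= x).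

(* storage capacity C(D) = max of cap_set (taken as its supremum; part (i)
   of the theorem asserts that the maximum is attained) *)
Definition capacity (R : realType) (D : asd) : R := sup (cap_set R D).

Arguments capacity R D : clear implicits.

Definition prodpart (S S' : finType) (p : {set {set S}}) (q : {set {set S'}})
  : {set {set S * S'}} := [set setX B B' | B in p, B' in q].

Definition asd_prod (D D' : asd) : asd :=
  @ASD (st D * st D')%type [set prodpart p q | p in parts D, q in parts D'].

Definition pmeet (S : finType) (p q : {set {set S}}) : {set {set S}} :=
  [set B :&: C | B in p, C in q] :\ finset.set0.

(* partitions pi_1 /\ ... /\ pi_k (k >= 1), built as ((pi_1 /\ pi_2) /\ ...) *)
Definition kmeets (S : finType) (P : {set {set {set S}}}) (k : nat)
  : {set {set {set S}}} :=
  iter k.-1 (fun Q : {set {set {set S}}} => [set pmeet p q | p in Q, q in P]) P.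

Definition asd_pow (D : asd) (k : nat) : asd := @ASD (st D) (kmeets (parts D) k).

From Pilot Require Import Defs.
From mathcomp Require Import all_boot all_order all_algebra.
From mathcomp Require Import all_classical all_reals all_analysis.
Import Order.TTheory GRing.Theory Num.Theory.
Set Implicit Arguments. Unset Strict Implicit.

(* Everything reduces to the largest number of blocks of a partition of D:
   C_m <= D exactly when some partition of D has at least m blocks (pull the
   singletons of C_m back along phi to get m distinct blocks, or conversely
   send i to a point of the i-th block).  A product partition has #|p| * #|q|
   blocks and a meet of k partitions has at most the product of their numbers
   of blocks; taking log2 gives additivity and the bound k * C(D). *)

Section Partitions.
Variable S : finType.
Implicit Types (p q : {set {set S}}) (B C : {set S}).

Lemma partition_block_eq p (A : {set S}) B C x :
  finset.partition p A -> B \in p -> C \in p -> x \in B -> x \in C -> B = C.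
Proof.
move=> /partition_trivIset triv_p Bp Cp xB xC.
by rewrite -(def_pblock triv_p Bp xB) (def_pblock triv_p Cp xC).
Qed.

Lemma partition_mem_cover p x : finset.partition p [set: S] -> x \in finset.cover p.
Proof. by move=> part_p; rewrite (cover_partition part_p) inE. Qed.

Lemma partition_card_gt0 p :
  finset.partition p [set: S] -> (0 < #|S|)%N -> (0 < #|p|)%N.
Proof.
move=> part_p; rewrite -cardsT -(cover_partition part_p) !card_gt0.
by apply: contraNneq => ->; rewrite /finset.cover big_set0.
Qed.

Lemma pmeet_partition p q :
  finset.partition p [set: S] -> finset.partition q [set: S] ->
  finset.partition (pmeet p q) [set: S].
Proof.
move=> part_p part_q; apply/and3P; split.
- apply/eqP/setP => x; rewrite inE; apply/bigcupP.
  exists (finset.pblock p x :&: finset.pblock q x); last first.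
    by rewrite inE !mem_pblock !partition_mem_cover.
  rewrite in_setD1 imset2_f ?pblock_mem ?partition_mem_cover // andbT.
  by apply/finset.set0Pn; exists x; rewrite inE !mem_pblock !partition_mem_cover.
- apply/finset.trivIsetP => A1 A2 /setD1P[_ /imset2P[B1 C1 B1p C1q ->]].
  move=> /setD1P[_ /imset2P[B2 C2 B2p C2q ->]] neq.
  rewrite -setI_eq0; apply: contraNT neq => /finset.set0Pn[x].
  rewrite !inE => /andP[/andP[xB1 xC1] /andP[xB2 xC2]].
  by rewrite (partition_block_eq part_p B1p B2p xB1 xB2)
             (partition_block_eq part_q C1q C2q xC1 xC2).
- by rewrite /pmeet setD11.
Qed.

Lemma card_pmeet_le p q : (#|pmeet p q| <= #|p| * #|q|)%N.
Proof.
apply: leq_trans (subset_leq_card (subsetDl _ _)) _.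
by rewrite curry_imset2X -cardsX leq_imset_card.
Qed.

End Partitions.

Lemma setX_inj (S S' : finType) (B1 B2 : {set S}) (C1 C2 : {set S'}) x y :
  x \in B1 -> y \in C1 -> finset.setX B1 C1 = finset.setX B2 C2 ->
  B1 = B2 /\ C1 = C2.
Proof.
move=> xB1 yC1 eqX.
have /finset.setXP[xB2 yC2] : (x, y) \in finset.setX B2 C2.
  by rewrite -eqX finset.in_setX xB1 yC1.
split; apply/setP => z.
- by have := congr1 (fun X : {set S * S'} => (z, y) \in X) eqX;
    rewrite /= !finset.in_setX yC1 yC2 !andbT.
- by have := congr1 (fun X : {set S * S'} => (x, z) \in X) eqX;
    rewrite /= !finset.in_setX xB1 xB2.
Qed.

Section ProductPartitions.
Variables S S' : finType.
Variables (p : {set {set S}}) (q : {set {set S'}}).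
Hypotheses (part_p : finset.partition p [set: S])
           (part_q : finset.partition q [set: S']).

Lemma prodpart_partition : finset.partition (prodpart p q) [set: S * S'].
Proof.
apply/and3P; split.
- apply/eqP/setP => [[x y]]; rewrite inE; apply/bigcupP.
  exists (finset.setX (finset.pblock p x) (finset.pblock q y)).
    by rewrite imset2_f ?pblock_mem ?partition_mem_cover.
  by rewrite inE /= !mem_pblock !partition_mem_cover.
- apply/finset.trivIsetP => A1 A2 /imset2P[B1 C1 B1p C1q ->].
  move=> /imset2P[B2 C2 B2p C2q ->] neq.
  rewrite -setI_eq0; apply: contraNT neq => /finset.set0Pn[[x y]].
  rewrite !inE /= => /andP[/andP[xB1 yC1] /andP[xB2 yC2]].
  by rewrite (partition_block_eq part_p B1p B2p xB1 xB2)
             (partition_block_eq part_q C1q C2q yC1 yC2).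
- apply/imset2P => -[B C Bp Cq B_C0].
  have [x xB] := finset.set0Pn _ (partition_neq0 part_p Bp).
  have [y yC] := finset.set0Pn _ (partition_neq0 part_q Cq).
  have : (x, y) \in finset.setX B C by rewrite finset.in_setX xB yC.
  by rewrite -B_C0 inE.
Qed.

Lemma card_prodpart : #|prodpart p q| = (#|p| * #|q|)%N.
Proof.
rewrite /prodpart curry_imset2X card_in_imset ?cardsX // => -[B1 C1] [B2 C2].
rewrite !finset.in_setX /= => /andP[B1p C1q] _.
have [x xB1] := finset.set0Pn _ (partition_neq0 part_p B1p).
have [y yC1] := finset.set0Pn _ (partition_neq0 part_q C1q).
by case/(setX_inj xB1 yC1) => -> ->.
Qed.

End ProductPartitions.

Section Meets.
Variables (S : finType) (P : {set {set {set S}}}).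

Lemma kmeets_partition k :
  (forall p, p \in P -> finset.partition p [set: S]) ->
  forall Q, Q \in kmeets P k -> finset.partition Q [set: S].
Proof.
move=> part_P; rewrite /kmeets; elim: k.-1 => [|n IHn] //= _ /imset2P[p q pQ qP ->].
exact: pmeet_partition (IHn _ pQ) (part_P _ qP).
Qed.

Lemma card_kmeets_le N k : (0 < k)%N ->
  (forall p, p \in P -> (#|p| <= N)%N) ->
  forall Q, Q \in kmeets P k -> (#|Q| <= N ^ k)%N.
Proof.
move=> k_gt0 le_P; rewrite /kmeets -[in N ^ k](prednK k_gt0).
elim: k.-1 => [|n IHn] Q /=; first by rewrite expn1; apply: le_P.
move=> /imset2P[p q pQ qP ->]; rewrite expnSr.
exact: leq_trans (card_pmeet_le p q) (leq_mul (IHn _ pQ) (le_P _ qP)).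
Qed.

Lemma kmeets_neq0 k : P != finset.set0 -> kmeets P k != finset.set0.
Proof.
move=> P_neq0; rewrite /kmeets; elim: k.-1 => //= n IHn.
have [p pQ] := finset.set0Pn _ IHn; have [q qP] := finset.set0Pn _ P_neq0.
by apply/finset.set0Pn; exists (pmeet p q); apply: imset2_f.
Qed.

End Meets.

Lemma Cm_le_card_part (D : asd) (m : nat) :
  (forall p, p \in parts D -> finset.partition p [set: st D]) ->
  asd_le (Cm m) D -> exists2 p, p \in parts D & (m <= #|p|)%N.
Proof.
move=> part_D [phi [alpha le_alpha]].
have [q_in ref_q] := le_alpha _ (set11 [set [set i] | i : 'I_m]).
set q := alpha _ in q_in ref_q.
have cover_q x : x \in finset.cover q.
  exact: partition_mem_cover (part_D q q_in).
pose blk i := finset.pblock q (phi i).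
have blk_inj : injective blk.
  move=> i j eq_ij.
  have pre_in : phi @^-1: blk i \in Defs.pcomp q phi.
    rewrite in_setD1 imset_f ?pblock_mem // andbT.
    by apply/finset.set0Pn; exists i; rewrite inE mem_pblock.
  have [_ /imsetP[k _ ->] sub_k] := ref_q _ pre_in.
  have /set1P-> : i \in [set k] by apply: (fintype.subsetP sub_k); rewrite inE mem_pblock.
  have /set1P-> // : j \in [set k].
  by apply: (fintype.subsetP sub_k); rewrite inE eq_ij mem_pblock.
exists q => //; rewrite -[m]card_ord -(card_imset _ blk_inj).
by apply/subset_leq_card/fintype.subsetP => _ /imsetP[i _ ->]; apply: pblock_mem.
Qed.

Lemma Cm_le_of_card_part (D : asd) (m : nat) p :
  p \in parts D -> finset.partition p [set: st D] -> (m <= #|p|)%N ->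
  asd_le (Cm m) D.
Proof.
move=> p_in part_p le_mp.
pose blk (i : 'I_m) : {set st D} := enum_val (widen_ord le_mp i).
have blk_in i : blk i \in p by apply: enum_valP.
have blk_inj : injective blk.
  by move=> i j /enum_val_inj/(congr1 val) eq_ij; apply/val_inj/eq_ij.
have blk_ne i : exists x, x \in blk i.
  by apply/finset.set0Pn; apply: partition_neq0 part_p (blk_in i).
pose phi i := xchoose (blk_ne i).
have phi_blk i : phi i \in blk i by apply: xchooseP.
exists phi, (fun _ => p) => _ /set1P->; split=> // A.
move=> /setD1P[ne /imsetP[B B_in eqA]]; subst A.
have [i] := finset.set0Pn _ ne; rewrite inE => phi_iB.
have blk_i : blk i = B := partition_block_eq part_p (blk_in i) B_in (phi_blk i) phi_iB.
exists [set i]; first exact: imset_f.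
apply/fintype.subsetP => j; rewrite !inE => phi_jB; apply/eqP/blk_inj.
by rewrite blk_i (partition_block_eq part_p (blk_in j) B_in (phi_blk j) phi_jB).
Qed.

Definition max_blocks (D : asd) : nat := \max_(p in parts D) #|p|.

Lemma max_blocks_ge (D : asd) p : p \in parts D -> (#|p| <= max_blocks D)%N.
Proof. exact: leq_bigmax_cond. Qed.

Section WellFormed.
Variable D : asd.
Hypothesis wf_D : wf_asd D.

Lemma max_blocks_attained : exists2 p, p \in parts D & #|p| = max_blocks D.
Proof.
case: wf_D => _ _ parts_neq0.
rewrite /max_blocks; have : (0 < #|parts D|)%N by rewrite card_gt0.
by case/(eq_bigmax_cond (fun p : {set {set st D}} => #|p|)) => p p_in ->; exists p.
Qed.

Lemma max_blocks_gt0 : (0 < max_blocks D)%N.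
Proof.
have [p p_in <-] := max_blocks_attained; case: wf_D => part_D st_gt0 _.
exact: partition_card_gt0 (part_D p p_in) st_gt0.
Qed.

Lemma Cm_le_max_blocks m : asd_le (Cm m) D <-> (m <= max_blocks D)%N.
Proof.
have [part_D _ _] := wf_D; split.
- case/(Cm_le_card_part part_D) => p p_in le_mp.
  exact: leq_trans le_mp (max_blocks_ge p_in).
- have [p p_in <-] := max_blocks_attained.
  exact: Cm_le_of_card_part p_in (part_D p p_in).
Qed.

End WellFormed.

Lemma wf_asd_prod (D D' : asd) : wf_asd D -> wf_asd D' -> wf_asd (asd_prod D D').
Proof.
move=> [part_D st_gt0 parts_neq0] [part_D' st_gt0' parts_neq0']; split => /=.
- by move=> _ /imset2P[p q p_in q_in ->]; apply: prodpart_partition;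
    [apply: part_D | apply: part_D'].
- by rewrite card_prod muln_gt0 st_gt0 st_gt0'.
- have [p p_in] := finset.set0Pn _ parts_neq0.
  have [q q_in] := finset.set0Pn _ parts_neq0'.
  by apply/finset.set0Pn; exists (prodpart p q); apply: imset2_f.
Qed.

Lemma max_blocks_prod (D D' : asd) : wf_asd D -> wf_asd D' ->
  max_blocks (asd_prod D D') = (max_blocks D * max_blocks D')%N.
Proof.
move=> wf_D wf_D'; have [part_D _ _] := wf_D; have [part_D' _ _] := wf_D'.
apply/eqP; rewrite eqn_leq; apply/andP; split.
- apply/bigmax_leqP => _ /imset2P[p q p_in q_in ->].
  rewrite card_prodpart ?part_D ?part_D' //.
  exact: leq_mul (max_blocks_ge p_in) (max_blocks_ge q_in).
- have [p p_in <-] := max_blocks_attained wf_D.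
  have [q q_in <-] := max_blocks_attained wf_D'.
  rewrite -card_prodpart ?part_D ?part_D' //; apply: max_blocks_ge.
  exact: imset2_f.
Qed.

Lemma wf_asd_pow (D : asd) k : wf_asd D -> wf_asd (asd_pow D k).
Proof.
move=> [part_D st_gt0 parts_neq0]; split => //=.
- exact: kmeets_partition.
- exact: kmeets_neq0.
Qed.

Lemma max_blocks_pow_le (D : asd) k : (0 < k)%N ->
  (max_blocks (asd_pow D k) <= max_blocks D ^ k)%N.
Proof.
move=> k_gt0; apply/bigmax_leqP => Q.
exact: (card_kmeets_le k_gt0 (@max_blocks_ge D)).
Qed.

Local Open Scope ring_scope.

Section Capacity.
Variable R : realType.

Lemma log2_nat_le (m n : nat) : (0 < m)%N -> (m <= n)%N ->
  log2 (m%:R : R) <= log2 (n%:R : R).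
Proof.
move=> m_gt0 le_mn; rewrite /log2 ler_pM2r ?invr_gt0 ?ln_gt0 ?ltr1n //.
by rewrite ler_ln ?posrE ?ltr0n ?ler_nat // (leq_trans m_gt0).
Qed.

Lemma log2_natM (m n : nat) : (0 < m)%N -> (0 < n)%N ->
  log2 ((m * n)%:R : R) = log2 (m%:R : R) + log2 (n%:R : R).
Proof. by move=> m_gt0 n_gt0; rewrite /log2 natrM lnM ?posrE ?ltr0n // mulrDl. Qed.

Lemma log2_natX (m k : nat) : (0 < m)%N ->
  log2 ((m ^ k)%:R : R) = k%:R * log2 (m%:R : R).
Proof. by move=> m_gt0; rewrite /log2 natrX lnXn ?ltr0n // mulr_natl mulrnAl. Qed.

Lemma sup_is_max (A : set R) x : is_max A x -> sup A = x.
Proof.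
move=> [Ax ub_x]; apply/eqP; rewrite eq_le ge_sup ?ub_le_sup //; by exists x.
Qed.

Lemma cap_set_max (D : asd) : wf_asd D ->
  is_max (cap_set R D) (log2 ((max_blocks D)%:R : R)).
Proof.
move=> wf_D; split.
- by exists (max_blocks D) => //; split; [apply: max_blocks_gt0 | apply/Cm_le_max_blocks].
- move=> _ [m [m_gt0 /(Cm_le_max_blocks wf_D) le_m] ->].
  exact: log2_nat_le.
Qed.

Lemma capacityE (D : asd) : wf_asd D -> capacity R D = log2 ((max_blocks D)%:R : R).
Proof. by move=> wf_D; apply/sup_is_max/cap_set_max. Qed.

End Capacity.

Theorem proposition3 (R : realType) :
  (forall D : asd, wf_asd D ->
     is_max (cap_set R D) (capacity R D) /\
     is_max [set x | exists2 p, p \in parts D & x = log2 (#|p|%:R : R)]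
            (capacity R D)) /\
  (forall D D' : asd, wf_asd D -> wf_asd D' ->
     capacity R (asd_prod D D') = capacity R D + capacity R D') /\
  (forall (D : asd) (k : nat), wf_asd D -> (1 <= k)%N ->
     capacity R (asd_pow D k) <= k%:R * capacity R D).
Proof.
split; [|split].
- move=> D wf_D; rewrite capacityE //; split; first exact: cap_set_max.
  have [part_D st_gt0 _] := wf_D; split.
    by have [p p_in <-] := max_blocks_attained wf_D; exists p.
  move=> _ [p p_in ->]; apply: log2_nat_le (max_blocks_ge p_in).
  exact: partition_card_gt0 (part_D p p_in) st_gt0.
- move=> D D' wf_D wf_D'.
  rewrite (capacityE R (wf_asd_prod wf_D wf_D')) !capacityE // max_blocks_prod //.
  by rewrite log2_natM ?max_blocks_gt0.
- move=> D k wf_D k_gt0; rewrite (capacityE R (wf_asd_pow k wf_D)) capacityE //.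
  rewrite -log2_natX ?max_blocks_gt0 //.
  exact: log2_nat_le (max_blocks_gt0 (wf_asd_pow k wf_D)) (max_blocks_pow_le D k_gt0).
Qed.
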